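(* There are no rational numbers (in particular, no integers) $x_1,x_2,x_3,d_1,d_2,d_3,L$ such that $\operatorname{rank}N\le 2$, $\operatorname{rank}N_1=1$, $\operatorname{rank}N_2=2$, and $\tilde p_1=\tilde p_2=\dots=\tilde p_8=0$. Likewise there are no such rational numbers with $\operatorname{rank}N\le 2$, $\operatorname{rank}N_1=1$, $\operatorname{rank}N_2=2$ satisfying $p_0=p_1=p_2=p_3=0$.
   Context: Define $p_0=x_1^2+x_2^2+x_3^2-L^2$, $p_1=x_2^2+x_3^2-d_1^2$, $p_2=x_3^2+x_1^2-d_2^2$, $p_3=x_1^2+x_2^2-d_3^2$, and $\tilde p_1=p_0$, $\tilde p_2=p_1+p_2+p_3$, $\tilde p_3=d_1p_1+d_2p_2+d_3p_3$, $\tilde p_4=x_1p_1+x_2p_2+x_3p_3$, $\tilde p_5=x_1d_1p_1+x_2d_2p_2+x_3d_3p_3$, $\tilde p_6=x_1^2p_1+x_2^2p_2+x_3^2p_3$, $\tilde p_7=d_1^2p_1+d_2^2p_2+d_3^2p_3$, $\tilde p_8=x_1^2d_1^2p_1+x_2^2d_2^2p_2+x_3^2d_3^2p_3$. $N$ is the $3\times 7$ matrix whose $i$-th row is $(1,\ d_i,\ x_i,\ x_id_i,\ x_i^2,\ d_i^2,\ x_i^2d_i^2)$; $N_1$ is the $3\times 2$ matrix with rows $(1,d_i)$; $N_2$ is the $3\times 2$ matrix with rows $(1,x_i)$, $i=1,2,3$. Ranks are over $\mathbb{Q}$. *)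

From HB Require Import structures.
From mathcomp Require Import all_boot all_order all_algebra.
Set Implicit Arguments. Unset Strict Implicit. Unset Printing Implicit Defensive.
Import Order.TTheory GRing.Theory Num.Theory.
Local Open Scope ring_scope.

Section Defs.
Variables (x1 x2 x3 d1 d2 d3 L : rat).

Definition p0 : rat := x1 ^+ 2 + x2 ^+ 2 + x3 ^+ 2 - L ^+ 2.
Definition p1 : rat := x2 ^+ 2 + x3 ^+ 2 - d1 ^+ 2.
Definition p2 : rat := x3 ^+ 2 + x1 ^+ 2 - d2 ^+ 2.
Definition p3 : rat := x1 ^+ 2 + x2 ^+ 2 - d3 ^+ 2.

Definition pt1 : rat := p0.
Definition pt2 : rat := p1 + p2 + p3.
Definition pt3 : rat := d1 * p1 + d2 * p2 + d3 * p3.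
Definition pt4 : rat := x1 * p1 + x2 * p2 + x3 * p3.
Definition pt5 : rat := x1 * d1 * p1 + x2 * d2 * p2 + x3 * d3 * p3.
Definition pt6 : rat := x1 ^+ 2 * p1 + x2 ^+ 2 * p2 + x3 ^+ 2 * p3.
Definition pt7 : rat := d1 ^+ 2 * p1 + d2 ^+ 2 * p2 + d3 ^+ 2 * p3.
Definition pt8 : rat :=
  x1 ^+ 2 * d1 ^+ 2 * p1 + x2 ^+ 2 * d2 ^+ 2 * p2 + x3 ^+ 2 * d3 ^+ 2 * p3.

(* x_i and d_i, indexed by i : 'I_3 (i = 0,1,2 stands for 1,2,3) *)
Definition xv (i : 'I_3) : rat := nth 0 [:: x1; x2; x3] i.
Definition dv (i : 'I_3) : rat := nth 0 [:: d1; d2; d3] i.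

Definition Nmx : 'M[rat]_(3, 7) :=
  \matrix_(i < 3, j < 7)
    nth 0 [:: 1; dv i; xv i; xv i * dv i; xv i ^+ 2; dv i ^+ 2;
              xv i ^+ 2 * dv i ^+ 2] j.
Definition N1mx : 'M[rat]_(3, 2) := \matrix_(i < 3, j < 2) nth 0 [:: 1; dv i] j.
Definition N2mx : 'M[rat]_(3, 2) := \matrix_(i < 3, j < 2) nth 0 [:: 1; xv i] j.
End Defs.

From HB Require Import structures.
From mathcomp Require Import all_boot all_order all_algebra.
From mathcomp Require Import ring lra zify.
Set Implicit Arguments. Unset Strict Implicit. Unset Printing Implicit Defensive.
Import Order.TTheory GRing.Theory Num.Theory.
Local Open Scope ring_scope.

(* Proof of Theorem 5.2.  Only three of the hypotheses carry weight:
   rank N1 = 1 forces d_1 = d_2 = d_3 =: d, and rank N2 = 2 forces the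
   x_i not to be all equal.  With a common d,
   - first system:  p~1 = 0 gives x_1^2+x_2^2+x_3^2 = L^2 and p~2 = 0 then
     gives 2 L^2 = 3 d^2, so (2L/d)^2 = 6 unless d = 0; hence d = 0 and the
     x_i all vanish;
   - second system: p_1 = p_2 = p_3 = 0 give x_1^2 = x_2^2 = x_3^2 and
     d^2 = 2 x_1^2, so (d/x_1)^2 = 2 unless x_1 = 0; again all x_i vanish.
   Either way the x_i are equal, a contradiction. *)

(* No coprime a, b satisfy a^2 = 2c b^2 with c odd: 2 would divide both. *)
Lemma sqr_neq_double_odd_nat (a b c : nat) :
  odd c -> coprime a b -> (a * a = (2 * c) * (b * b))%N -> False.
Proof.
move=> odd_c cop_ab Eab.
have prime2 : prime 2 by [].
have /dvdnP [a' def_a] : (2 %| a)%N.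
  have : (2 %| a * a)%N by rewrite Eab -mulnA dvdn_mulr.
  by rewrite Euclid_dvdM // orbb.
subst a.
have Ec : (a' * a' * 2 = c * (b * b))%N by nia.
have two_dvd_b : (2 %| b)%N.
  have : (2 %| c * (b * b))%N by rewrite -Ec dvdn_mull.
  by rewrite Euclid_dvdM // Euclid_dvdM // orbb dvdn2 odd_c.
have : (2 %| gcdn (a' * 2) b)%N by rewrite dvdn_gcd dvdn_mull.
by rewrite (eqP cop_ab).
Qed.

(* Hence 2c is not the square of a rational when c is odd (write r = n/d in
   lowest terms and clear denominators). *)
Lemma rat_sqr_neq_double_odd (c : nat) (r : rat) : odd c -> r ^+ 2 != (2 * c)%:R.
Proof.
move=> odd_c; apply/eqP => Er.
have den_neq0 : (denq r)%:~R != 0 :> rat by rewrite intr_eq0 denq_neq0.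
have Erat : (numq r * numq r)%:~R = ((2 * c)%:R * (denq r * denq r))%:~R :> rat.
  have clear_den (n d : rat) : d != 0 -> (n / d) ^+ 2 * (d * d) = n * n.
    by move=> d_neq0; field.
  by rewrite !intrM mulrz_nat -Er -[X in X ^+ 2]divq_num_den clear_den.
have Enat : (`|numq r| * `|numq r| = (2 * c) * (`|denq r| * `|denq r|))%N.
  by rewrite -!abszM (intr_inj Erat) abszM natz.
exact: sqr_neq_double_odd_nat odd_c (coprime_num_den r) Enat.
Qed.

Section RankCriteria.
Variable F : fieldType.

Lemma rank_ge2_of_rows (m : nat) (A : 'M[F]_(m, 2)) (i j : 'I_m) :
  A i ord0 = 1 -> A j ord0 = 1 -> A i ord_max != A j ord_max ->
  (2 <= \rank A)%N.
Proof.
move=> Ai1 Aj1 Aij.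
pose f (k : 'I_2) : 'I_m := if k == ord0 then i else j.
have : (\rank (rowsub f A) <= \rank A)%N by apply/mxrankS/rowsub_sub.
suff -> : \rank (rowsub f A) = 2%N by [].
apply: mxrank_unit; rewrite unitmxE unitfE.
rewrite (expand_det_row _ ord0) !big_ord_recl big_ord0 /cofactor !det_mx11 !mxE /f /=.
have -> : lift ord0 (ord0 : 'I_1) = ord_max :> 'I_2 by apply/val_inj.
have -> : lift (ord_max : 'I_2) (ord0 : 'I_1) = ord0 :> 'I_2 by apply/val_inj.
rewrite Ai1 Aj1 /= add0n /bump /= expr0 expr1 !mul1r mulr1 mulrN1 addr0.
by rewrite subr_eq0 eq_sym.
Qed.

(* A matrix all of whose rows coincide is a column of ones times a single row,
   hence has rank at most 1. *)
Lemma rank_le1_of_equal_rows (m n : nat) (A : 'M[F]_(m.+1, n)) :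
  (forall i, row i A = row 0 A) -> (\rank A <= 1)%N.
Proof.
move=> rowsA.
have -> : A = const_mx 1 *m row 0 A.
  apply/matrixP => i k; have := congr1 (fun M : 'rV[F]_n => M 0 k) (rowsA i).
  by rewrite !mxE big_ord1 !mxE mul1r => ->.
exact: leq_trans (mxrankM_maxr _ _) (rank_leq_row _).
Qed.

End RankCriteria.

Lemma N1_rank1_eq (d1 d2 d3 : rat) :
  \rank (N1mx d1 d2 d3) = 1%N -> d2 = d1 /\ d3 = d1.
Proof.
move=> rank1.
have dv_eq (i : 'I_3) : dv d1 d2 d3 i = dv d1 d2 d3 0.
  apply/eqP; apply: contraT => neq.
  have := @rank_ge2_of_rows _ _ (N1mx d1 d2 d3) i 0.
  by rewrite !mxE rank1; apply.
by split; [exact: (dv_eq 1) | exact: (dv_eq 2)].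
Qed.

Lemma N2_rank2_neq (x1 x2 x3 : rat) :
  \rank (N2mx x1 x2 x3) = 2%N -> ~ (x2 = x1 /\ x3 = x1).
Proof.
move=> rank2 [x2_eq x3_eq]; subst x2 x3.
have : (\rank (N2mx x1 x1 x1) <= 1)%N.
  apply: rank_le1_of_equal_rows => i; apply/rowP => k.
  by rewrite !mxE; case: i => [[|[|[|]]] //= _].
by rewrite rank2.
Qed.

Lemma sum3_sqr_eq0 (R : realDomainType) (a b c : R) :
  a ^+ 2 + b ^+ 2 + c ^+ 2 = 0 -> [/\ a = 0, b = 0 & c = 0].
Proof.
move/eqP; rewrite paddr_eq0 ?addr_ge0 ?sqr_ge0 // paddr_eq0 ?sqr_ge0 //.
by rewrite !sqrf_eq0 => /andP [/andP [/eqP -> /eqP ->] /eqP ->].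
Qed.

Lemma pt12_common_d_solution (x1 x2 x3 d L : rat) :
  pt1 x1 x2 x3 L = 0 -> pt2 x1 x2 x3 d d d = 0 ->
  [/\ x1 = 0, x2 = 0 & x3 = 0].
Proof.
rewrite /pt1 /pt2 /p0 /p1 /p2 /p3 => e1 e2.
have EL : 2 * L ^+ 2 = 3 * d ^+ 2 by lra.
have d_eq0 : d = 0.
  case: (eqVneq d 0) => // d_neq0; exfalso.
  apply: (negP (@rat_sqr_neq_double_odd 3 (2 * L / d) erefl)).
  apply/eqP; transitivity (2 * (2 * L ^+ 2) / d ^+ 2); first by field.
  by rewrite EL natrM; field.
subst d; apply: sum3_sqr_eq0; lra.
Qed.

Lemma p123_common_d_solution (x1 x2 x3 d : rat) :
  p1 x2 x3 d = 0 -> p2 x1 x3 d = 0 -> p3 x1 x2 d = 0 ->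
  [/\ x1 = 0, x2 = 0 & x3 = 0].
Proof.
rewrite /p1 /p2 /p3 => e1 e2 e3.
have x1_eq0 : x1 = 0.
  case: (eqVneq x1 0) => // x1_neq0; exfalso.
  apply: (negP (@rat_sqr_neq_double_odd 1 (d / x1) erefl)).
  have Ed : d ^+ 2 = 2 * x1 ^+ 2 by lra.
  apply/eqP; transitivity (d ^+ 2 / x1 ^+ 2); first by field.
  by rewrite Ed muln1; field.
subst x1; apply: sum3_sqr_eq0; lra.
Qed.

Theorem theorem5p2 :
  (~ exists x1 x2 x3 d1 d2 d3 L : rat,
      [/\ (\rank (Nmx x1 x2 x3 d1 d2 d3) <= 2)%N,
          \rank (N1mx d1 d2 d3) = 1%N,
          \rank (N2mx x1 x2 x3) = 2%N &
          (pt1 x1 x2 x3 L = 0 /\ pt2 x1 x2 x3 d1 d2 d3 = 0 /\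
           pt3 x1 x2 x3 d1 d2 d3 = 0 /\ pt4 x1 x2 x3 d1 d2 d3 = 0 /\
           pt5 x1 x2 x3 d1 d2 d3 = 0 /\ pt6 x1 x2 x3 d1 d2 d3 = 0 /\
           pt7 x1 x2 x3 d1 d2 d3 = 0 /\ pt8 x1 x2 x3 d1 d2 d3 = 0)])
  /\
  (~ exists x1 x2 x3 d1 d2 d3 L : rat,
      [/\ (\rank (Nmx x1 x2 x3 d1 d2 d3) <= 2)%N,
          \rank (N1mx d1 d2 d3) = 1%N,
          \rank (N2mx x1 x2 x3) = 2%N &
          [/\ p0 x1 x2 x3 L = 0, p1 x2 x3 d1 = 0,
              p2 x1 x3 d2 = 0 & p3 x1 x2 d3 = 0]]).
Proof.
split.
- move=> [x1 [x2 [x3 [d1 [d2 [d3 [L [_ rkN1 rkN2 [e1 [e2 _]]]]]]]]]].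
  have [d2_eq d3_eq] := N1_rank1_eq rkN1; subst d2 d3.
  have [x1_eq0 x2_eq0 x3_eq0] := pt12_common_d_solution e1 e2; subst x1 x2 x3.
  exact: N2_rank2_neq rkN2 (conj erefl erefl).
- move=> [x1 [x2 [x3 [d1 [d2 [d3 [L [_ rkN1 rkN2 [_ e1 e2 e3]]]]]]]]].
  have [d2_eq d3_eq] := N1_rank1_eq rkN1; subst d2 d3.
  have [x1_eq0 x2_eq0 x3_eq0] := p123_common_d_solution e1 e2 e3; subst x1 x2 x3.
  exact: N2_rank2_neq rkN2 (conj erefl erefl).
Qed.
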